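(* Let $d\ge2$ and let $Q$ be a qplex whose set of extreme points forms a single orbit under the action $q\mapsto Rq$ of its preservation group $\mathcal{G}(Q)$. Then $\mathcal{G}(Q)$ is a strongly maximal stochastic subgroup of $\mathrm{O}(d^2)$.
   Context: Fix an integer $d\ge 2$. $\mathrm{O}(d^2)$ is the group of real orthogonal $d^2\times d^2$ matrices. $\langle\cdot,\cdot\rangle$ is the standard inner product on $\mathbb{R}^{d^2}$, $\|\cdot\|$ the Euclidean norm; $\overline{\mathrm{conv}}$ denotes closed convex hull. $\Delta=\{p\in\mathbb{R}^{d^2}: p(i)\ge0,\ \sum_ip(i)=1\}$; $H=\{u\in\mathbb{R}^{d^2}:\sum_i u(i)=1\}$; $c=(1/d^2,\dots,1/d^2)$. For $A\subseteq H$ the polar is $A^*=\{u\in H:\langle u,v\rangle\ge\frac{1}{d(d+1)}\ \forall v\in A\}$. Out-ball $B_{\rm o}=\{u\in H:\|u-c\|\le r_{\rm o}\}$, $r_{\rm o}^2=\frac{d-1}{d^2(d+1)}$. A qplex is a set $Q\subseteq\Delta\cap B_{\rm o}$ with $Q^*=Q$. A measurement is an array $r(i|j)\ge0$ with $\sum_i r(i|j)=1$ for every $j$; for $q\in Q$, $q_r(i)=\sum_j[(d+1)q(j)-\frac1d]r(i|j)$; it is $Q$-preserving if $\{q_r:q\in Q\}=Q$; its stretched measurement matrix is $R_{ij}=(d+1)r(i|j)-\frac1d\sum_k r(i|k)$. The preservation group $\mathcal{G}(Q)$ is the set of stretched measurement matrices of $Q$-preserving measurements. A subgroup $\mathcal{G}\subseteq\mathrm{O}(d^2)$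 is stochastic if every $R\in\mathcal{G}$ satisfies $R_{ij}\ge-\frac1d$ for all $i,j$ and $Rc=c$. For $R\in\mathcal{G}$ set $s^R_i(j)=\frac{dR_{ij}+1}{d(d+1)}$; the orbital germ of $\mathcal{G}$ is $\{s^R_i: R\in\mathcal{G},\ i=1,\dots,d^2\}$. A stochastic subgroup is maximal if it is not contained in any strictly larger stochastic subgroup, and strongly maximal if it is maximal and the closed convex hull of its orbital germ is a qplex. *)

From Stdlib Require Import Reals.
From mathcomp Require Import all_boot.

Set Implicit Arguments.
Unset Strict Implicit.
Unset Printing Implicit Defensive.

Local Open Scope R_scope.

Definition Idx (d : nat) := 'I_(d * d)%N.
Definition Vec (d : nat) := Idx d -> R.
Definition Mat (d : nat) := Idx d -> Idx d -> R.

Definition sumR (n : nat) (f : 'I_n -> R) : R := \big[Rplus/0]_(i < n) f i.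

Definition dR (d : nat) : R := INR d.

Definition inner (d : nat) (u v : Vec d) : R := sumR (fun i => u i * v i).
Definition norm (d : nat) (u : Vec d) : R := sqrt (inner u u).
Definition vsub (d : nat) (u v : Vec d) : Vec d := fun i => u i - v i.

Definition cvec (d : nat) : Vec d := fun _ => 1 / (dR d * dR d).

Definition Simplex (d : nat) (p : Vec d) : Prop :=
  (forall i, 0 <= p i) /\ sumR p = 1.
Definition Hplane (d : nat) (u : Vec d) : Prop := sumR u = 1.

Definition polar (d : nat) (A : Vec d -> Prop) : Vec d -> Prop :=
  fun u => Hplane u /\ forall v, A v -> inner u v >= 1 / (dR d * (dR d + 1)).

Definition ro2 (d : nat) : R := (dR d - 1) / (dR d * dR d * (dR d + 1)).
Definition outball (d : nat) (u : Vec d) : Prop :=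
  Hplane u /\ norm (vsub u (@cvec d)) <= sqrt (ro2 d).

Definition qplex (d : nat) (Q : Vec d -> Prop) : Prop :=
  (forall q, Q q -> Simplex q /\ outball q) /\
  (forall u, polar Q u <-> Q u).

(* measurements r(i|j) = r i j *)
Definition measurement (d : nat) (r : Mat d) : Prop :=
  (forall i j, 0 <= r i j) /\ (forall j, sumR (fun i => r i j) = 1).

Definition q_r (d : nat) (r : Mat d) (q : Vec d) : Vec d :=
  fun i => sumR (fun j => ((dR d + 1) * q j - 1 / dR d) * r i j).

Definition Q_preserving (d : nat) (Q : Vec d -> Prop) (r : Mat d) : Prop :=
  forall p, Q p <-> exists q, Q q /\ p = q_r r q.

Definition stretched (d : nat) (r : Mat d) : Mat d :=
  fun i j => (dR d + 1) * r i j - 1 / dR d * sumR (fun k => r i k).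

Definition pres_group (d : nat) (Q : Vec d -> Prop) : Mat d -> Prop :=
  fun M => exists r, measurement r /\ Q_preserving Q r /\ M = stretched r.

Definition mmul (d : nat) (A B : Mat d) : Mat d :=
  fun i j => sumR (fun k => A i k * B k j).
Definition mtr (d : nat) (A : Mat d) : Mat d := fun i j => A j i.
Definition mid (d : nat) : Mat d := fun i j => if i == j then 1 else 0.
Definition mapply (d : nat) (A : Mat d) (v : Vec d) : Vec d :=
  fun i => sumR (fun j => A i j * v j).

Definition orthogonal (d : nat) (A : Mat d) : Prop := mmul (mtr A) A = @mid d.

Definition subgroupO (d : nat) (G : Mat d -> Prop) : Prop :=
  (forall A, G A -> orthogonal A) /\
  G (@mid d) /\
  (forall A B, G A -> G B -> G (mmul A B)) /\
  (forall A, G A -> G (mtr A)).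

Definition stochastic (d : nat) (G : Mat d -> Prop) : Prop :=
  subgroupO G /\
  forall A, G A -> (forall i j, A i j >= - (1 / dR d)) /\ mapply A (@cvec d) = @cvec d.

Definition maximal_stochastic (d : nat) (G : Mat d -> Prop) : Prop :=
  stochastic G /\
  ~ (exists G' : Mat d -> Prop, stochastic G' /\ (forall A, G A -> G' A) /\
                                (exists A, G' A /\ ~ G A)).

Definition orbital_germ (d : nat) (G : Mat d -> Prop) : Vec d -> Prop :=
  fun s => exists A i, G A /\
    s = (fun j => (dR d * A i j + 1) / (dR d * (dR d + 1))).

Definition conv_hull (d : nat) (A : Vec d -> Prop) : Vec d -> Prop :=
  fun v => exists (n : nat) (w : 'I_n -> R) (a : 'I_n -> Vec d),
    (forall k, 0 <= w k) /\ sumR w = 1 /\ (forall k, A (a k)) /\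
    v = (fun i => sumR (fun k => w k * a k i)).

Definition closure (d : nat) (A : Vec d -> Prop) : Vec d -> Prop :=
  fun v => forall eps, 0 < eps -> exists u, A u /\ norm (vsub v u) < eps.

Definition closed_conv_hull (d : nat) (A : Vec d -> Prop) : Vec d -> Prop :=
  closure (conv_hull A).

Definition strongly_maximal (d : nat) (G : Mat d -> Prop) : Prop :=
  maximal_stochastic G /\ qplex (closed_conv_hull (orbital_germ G)).

Definition extreme_point (d : nat) (Q : Vec d -> Prop) (q : Vec d) : Prop :=
  Q q /\ forall a b t, Q a -> Q b -> 0 < t < 1 ->
    q = (fun i => t * a i + (1 - t) * b i) -> a = q /\ b = q.

Definition single_orbit (d : nat) (G : Mat d -> Prop) (Q : Vec d -> Prop) : Prop :=
  exists q0, extreme_point Q q0 /\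
    forall q, extreme_point Q q <-> exists A, G A /\ q = mapply A q0.

From Pilot Require Import Defs.
From Stdlib Require Import Reals Lra FunctionalExtensionality.
From mathcomp Require Import all_boot all_algebra Rstruct.
From mathcomp Require all_order all_classical all_reals all_analysis Rstruct_topology.
Import GRing.Theory.

Set Implicit Arguments.
Unset Strict Implicit.
Unset Printing Implicit Defensive.

Local Open Scope R_scope.

(* A Q-preserving measurement acts by its stretched matrix R, which is orthogonal
   with unit row and column sums and maps Q onto Q; conversely every such R comes
   from a measurement (its own orbital germ), and its entries are then >= -1/d,
   this bound being exactly the polar inequality between two germs.  The germs
   [unit_germ i] of the identity have maximal norm in Q, hence are extreme, so
   under the single-orbit hypothesis the extreme points of Q are exactly the
   orbital germ of G(Q).  A nearest-point argument, together with the fact that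
   a strictly convex perturbation of a linear functional is maximised over Q at
   an extreme point, shows that Q is the closed convex hull of its extreme
   points; hence the hull of the orbital germ is Q itself, a qplex, and Q is the
   polar of the germ.  Finally, for a stochastic group G containing G(Q) the
   entry bound of [D B^T] says [<D^T s^I_j, s^B_i> >= 1/(d(d+1))], so every
   element of G maps the polar of the germ, i.e. Q, into itself, and lies in G(Q). *)

Section Sums.
Variable n : nat.
Implicit Types f g : 'I_n -> R.

Lemma eq_sumR f g : (forall i, f i = g i) -> sumR f = sumR g.
Proof. by move=> fg; apply: eq_bigr => i _. Qed.

Lemma sumRD f g : sumR (fun i => f i + g i) = sumR f + sumR g.
Proof. exact: big_split. Qed.

Lemma sumRN f : sumR (fun i => - f i) = - sumR f.
Proof. exact: sumrN. Qed.

Lemma sumRB f g : sumR (fun i => f i - g i) = sumR f - sumR g.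
Proof. by rewrite (@eq_sumR _ (fun i => f i + - g i)) // sumRD sumRN. Qed.

Lemma sumR_mull c f : sumR (fun i => c * f i) = c * sumR f.
Proof. by symmetry; apply: mulr_sumr. Qed.

Lemma sumR_mulr c f : sumR (fun i => f i * c) = sumR f * c.
Proof. by symmetry; apply: mulr_suml. Qed.

Lemma sumR_const c : sumR (fun _ : 'I_n => c) = INR n * c.
Proof.
rewrite /sumR big_const_ord.
elim: n => [|m IH]; first by rewrite /= Rmult_0_l.
rewrite S_INR /= IH.
change (c + INR m * c = (INR m + 1) * c); ring.
Qed.

Lemma sumR_ge0 f : (forall i, 0 <= f i) -> 0 <= sumR f.
Proof.
move=> f0; apply: big_ind => [|x y x0 y0|i _]; [exact: Rle_refl| |exact: f0].
by change (0 <= x + y); lra.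
Qed.

Lemma ler_sumR f g : (forall i, f i <= g i) -> sumR f <= sumR g.
Proof.
move=> fg; have : 0 <= sumR (fun i => g i - f i).
  by apply: sumR_ge0 => i; have := fg i; lra.
rewrite sumRB; lra.
Qed.

Lemma ler_term_sumR f i : (forall j, 0 <= f j) -> f i <= sumR f.
Proof.
move=> f0; rewrite /sumR (bigD1 i) //=.
have : 0 <= \big[Rplus/0]_(j < n | j != i) f j.
  apply: big_ind => [|x y x0 y0|j _]; [exact: Rle_refl| |exact: f0].
  by change (0 <= x + y); lra.
by change (0 <= \big[Rplus/0]_(j < n | j != i) f j ->
           f i <= f i + \big[Rplus/0]_(j < n | j != i) f j); lra.
Qed.

Lemma psumR_eq0 f : (forall j, 0 <= f j) -> sumR f = 0 -> forall i, f i = 0.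
Proof. by move=> f0 s0 i; have := ler_term_sumR i f0; have := f0 i; lra. Qed.

Lemma sumR_delta f i : sumR (fun j => (if i == j then 1 else 0) * f j) = f i.
Proof.
rewrite /sumR (bigD1 i) //= eqxx big1 /=.
- by change (1 * f i + 0 = f i); ring.
- by move=> j; rewrite eq_sym => /negbTE ->; change (0 * f j = 0); ring.
Qed.

End Sums.

Lemma exchange_sumR n m (F : 'I_n -> 'I_m -> R) :
  sumR (fun i => sumR (fun j => F i j)) = sumR (fun j => sumR (fun i => F i j)).
Proof. exact: exchange_big. Qed.

Lemma sumR_ord1 (F : 'I_1 -> R) : sumR F = F ord0.
Proof. exact: big_ord1. Qed.

Lemma sumR_split_ord n m (F : 'I_(n + m) -> R) :
  sumR F = sumR (fun j => F (lshift m j)) + sumR (fun j => F (rshift n j)).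
Proof. exact: big_split_ord. Qed.

Section Inner.
Variable d : nat.
Implicit Types u v w a b h : Vec d.

Definition vcomb t a b : Vec d := fun i => t * a i + (1 - t) * b i.

Lemma innerC u v : inner u v = inner v u.
Proof. by apply: eq_sumR => i; ring. Qed.

Lemma inner_self_ge0 u : 0 <= inner u u.
Proof. by apply: sumR_ge0 => i; nra. Qed.

Lemma inner_vsubl u v w : inner (vsub u v) w = inner u w - inner v w.
Proof. by rewrite /inner -sumRB; apply: eq_sumR => i; rewrite /vsub; ring. Qed.

Lemma inner_vsub_self a b :
  inner (vsub a b) (vsub a b) = inner a a + inner b b - 2 * inner a b.
Proof.
by rewrite /inner -sumR_mull -sumRD -sumRB; apply: eq_sumR => i; rewrite /vsub; ring.
Qed.

Lemma inner_vsub_le0 a b : inner (vsub a b) (vsub a b) <= 0 -> a = b.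
Proof.
move=> le0; have eq0 : inner (vsub a b) (vsub a b) = 0.
  by have := inner_self_ge0 (vsub a b); lra.
apply: functional_extensionality => i.
have := psumR_eq0 (f := fun i => vsub a b i * vsub a b i) (fun j => ltac:(nra)) eq0 i.
by rewrite /vsub; nra.
Qed.

Lemma inner_vcombr w t a b :
  inner w (vcomb t a b) = t * inner w a + (1 - t) * inner w b.
Proof. by rewrite /inner -!sumR_mull -sumRD; apply: eq_sumR => i; rewrite /vcomb; ring. Qed.

Lemma inner_vcomb_self t a b :
  inner (vcomb t a b) (vcomb t a b) =
  t * inner a a + (1 - t) * inner b b - t * (1 - t) * inner (vsub a b) (vsub a b).
Proof.
rewrite /inner -!sumR_mull -sumRD -sumRB.
by apply: eq_sumR => i; rewrite /vcomb /vsub; ring.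
Qed.

Lemma inner_lincomb_self h w t s :
  inner (fun i => t * h i + s * w i) (fun i => t * h i + s * w i) =
  t * t * inner h h + 2 * t * s * inner h w + s * s * inner w w.
Proof. by rewrite /inner -!sumR_mull -!sumRD; apply: eq_sumR => i; ring. Qed.

Lemma inner_add_self_le a b :
  inner (fun i => a i + b i) (fun i => a i + b i) <= 2 * inner a a + 2 * inner b b.
Proof.
have := inner_self_ge0 (vsub a b); rewrite inner_vsub_self.
have -> : inner (fun i => a i + b i) (fun i => a i + b i) =
          inner a a + inner b b + 2 * inner a b.
  by rewrite /inner -sumR_mull -!sumRD; apply: eq_sumR => i; ring.
lra.
Qed.

Lemma inner_small w eps : 0 < eps ->
  exists del, 0 < del /\ forall h, inner h h < del -> Rabs (inner h w) < eps.
Proof.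
move=> eps0; set W := inner w w; have W0 : 0 <= W := inner_self_ge0 w.
exists (eps * eps / (2 * (W + 1))); split; first by apply: Rdiv_lt_0_compat; nra.
move=> h hh; set H := inner h h in hh *; set X := inner h w.
set t := 2 * (W + 1) / eps.
have t0 : 0 < t by apply: Rdiv_lt_0_compat; lra.
have e1 := inner_self_ge0 (fun i => t * h i + 1 * w i).
have e2 := inner_self_ge0 (fun i => t * h i + (-1) * w i).
rewrite inner_lincomb_self -/H -/X -/W in e1.
rewrite inner_lincomb_self -/H -/X -/W in e2.
have tH : t * t * H < 2 * (W + 1).
  have <- : t * t * (eps * eps / (2 * (W + 1))) = 2 * (W + 1) by rewrite /t; field; lra.
  by apply: Rmult_lt_compat_l => //; nra.
have teps : t * eps = 2 * (W + 1) by rewrite /t; field; lra.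
apply: Rabs_def1; nra.
Qed.

Lemma inner_lt_norm u e : 0 < e -> inner u u < e * e -> norm u < e.
Proof.
move=> e0 lt; rewrite /norm -(sqrt_square e); last lra.
by apply: sqrt_lt_1 => //; [exact: inner_self_ge0 | nra].
Qed.

Lemma norm_lt_inner u e : 0 < e -> norm u < sqrt e -> inner u u < e.
Proof. by move=> e0 lt; apply: sqrt_lt_0 => //; [exact: inner_self_ge0 | lra]. Qed.

End Inner.

Section ClosureHull.
Variable d : nat.
Implicit Types (X Y S : Vec d -> Prop) (u v w p c s : Vec d).

Lemma closure_subset X v : X v -> Defs.closure X v.
Proof.
move=> Xv eps eps0; exists v; split => //; apply: inner_lt_norm => //.
rewrite (_ : inner (vsub v v) (vsub v v) = 0); first by nra.
by rewrite /inner (@eq_sumR _ _ (fun _ => 0)) ?sumR_const; [ring | move=> i; rewrite /vsub; ring].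
Qed.

Lemma closure_mono X Y v : (forall u, X u -> Y u) -> Defs.closure X v -> Defs.closure Y v.
Proof. by move=> XY Xv eps eps0; have [u [Xu uv]] := Xv eps eps0; exists u; split; auto. Qed.

Lemma closure_idem X v : Defs.closure (Defs.closure X) v -> Defs.closure X v.
Proof.
move=> Xv eps eps0; have e0 : 0 < eps * eps / 4 by nra.
have [u [Xu uv]] := Xv _ (sqrt_lt_R0 _ e0).
have [c [Xc cu]] := Xu _ (sqrt_lt_R0 _ e0).
exists c; split => //; apply: inner_lt_norm => //.
have := norm_lt_inner e0 uv; have := norm_lt_inner e0 cu.
have := inner_add_self_le (vsub v u) (vsub u c).
have -> : (fun i => vsub v u i + vsub u c i) = vsub v c.
  by apply: functional_extensionality => i; rewrite /vsub; ring.
lra.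
Qed.

Lemma closure_inner_ge X v w a :
  Defs.closure X v -> (forall u, X u -> a <= inner u w) -> a <= inner v w.
Proof.
move=> Xv Xa; case: (Rle_lt_dec a (inner v w)) => // lt.
have [del [del0 small]] := inner_small w (proj2 (Rlt_0_minus _ _) lt).
have [u [Xu uv]] := Xv _ (sqrt_lt_R0 _ del0).
have := small _ (norm_lt_inner del0 uv); rewrite inner_vsubl => /Rabs_def2.
by have := Xa u Xu; lra.
Qed.

Lemma closure_sumR X v : Defs.closure X v -> (forall u, X u -> sumR u = 1) -> sumR v = 1.
Proof.
move=> Xv X1.
have E (r : R) u : inner u (fun _ => r) = sumR u * r by rewrite /inner sumR_mulr.
have ge := closure_inner_ge (w := fun _ => 1) (a := 1) Xv.
have le := closure_inner_ge (w := fun _ => -1) (a := -1) Xv.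
rewrite !E in ge le.
by have := ge (fun u Xu => ltac:(rewrite E X1 //; lra));
   have := le (fun u Xu => ltac:(rewrite E X1 //; lra)); lra.
Qed.

Lemma conv_hull_subset S s : S s -> conv_hull S s.
Proof.
move=> Ss; exists 1%N, (fun _ => 1), (fun _ => s); split; first by move=> k; lra.
split; first by rewrite sumR_ord1.
by split => //; apply: functional_extensionality => i; rewrite sumR_ord1; ring.
Qed.

Lemma inner_conv_hull S c w :
  conv_hull S c -> exists n (t : 'I_n -> R) (a : 'I_n -> Vec d),
    (forall k, 0 <= t k) /\ sumR t = 1 /\ (forall k, S (a k)) /\
    inner c w = sumR (fun k => t k * inner (a k) w).
Proof.
move=> [n [t [a [t0 [t1 [Sa ->]]]]]]; exists n, t, a; do 3!split => //.
rewrite /inner (@eq_sumR _ _ (fun i => sumR (fun k => t k * a k i * w i))).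
  by rewrite exchange_sumR; apply: eq_sumR => k; rewrite -sumR_mull; apply: eq_sumR => i; ring.
by move=> i; rewrite sumR_mulr.
Qed.

Lemma conv_hull_inner_ge S w c a :
  (forall s, S s -> a <= inner s w) -> conv_hull S c -> a <= inner c w.
Proof.
move=> Sa /(inner_conv_hull w) [n [t [b [t0 [t1 [Sb ->]]]]]].
have <- : sumR (fun k => t k * a) = a by rewrite sumR_mulr t1; ring.
by apply: ler_sumR => k; apply: Rmult_le_compat_l; [exact: t0 | exact: Sa].
Qed.

Lemma conv_hull_sumR S c : (forall s, S s -> sumR s = 1) -> conv_hull S c -> sumR c = 1.
Proof.
move=> S1 Sc; have E1 u : inner u (fun _ => 1) = sumR u by apply: eq_sumR => i; ring.
have [n [t [b [_ [t1 [Sb E]]]]]] := inner_conv_hull (fun _ => 1) Sc.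
rewrite -E1 E -[RHS]t1; apply: eq_sumR => k; by rewrite E1 S1 // Rmult_1_r.
Qed.

Lemma conv_hull_vcomb S s c t :
  S s -> conv_hull S c -> 0 <= t <= 1 -> conv_hull S (vcomb t s c).
Proof.
move=> Ss [n [w [a [w0 [w1 [Sa ->]]]]]] t01.
have splitl (j : 'I_n) : split (lshift 1 j) = inl j := unsplitK (inl j : 'I_n + 'I_1).
have splitr : split (rshift n (@ord0 0)) = inr ord0 := unsplitK (inr ord0).
have sum_last (F : 'I_(n + 1) -> R) :
    sumR F = sumR (fun j : 'I_n => F (lshift 1 j)) + F (rshift n ord0).
  by rewrite sumR_split_ord sumR_ord1.
exists (n + 1)%N, (fun k => if split k is inl j then (1 - t) * w j else t),
  (fun k => if split k is inl j then a j else s).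
split; first by move=> k; case: (split k) => j; [apply: Rmult_le_pos; [lra | exact: w0] | lra].
split.
  rewrite sum_last (@eq_sumR _ _ (fun j => (1 - t) * w j)); last by move=> j /=; rewrite splitl.
  by rewrite sumR_mull w1 splitr; ring.
split; first by move=> k; case: (split k).
apply: functional_extensionality => i; rewrite /vcomb sum_last splitr; symmetry.
rewrite (@eq_sumR _ _ (fun j => (1 - t) * (w j * a j i))); last by move=> j /=; rewrite splitl; ring.
by rewrite sumR_mull; ring.
Qed.

Lemma closed_conv_hull_vcomb S s p t :
  S s -> closed_conv_hull S p -> 0 <= t <= 1 -> closed_conv_hull S (vcomb t s p).
Proof.
move=> Ss Sp t01 eps eps0; have e0 : 0 < eps * eps by nra.
have [c [Sc cp]] := Sp _ (sqrt_lt_R0 _ e0).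
exists (vcomb t s c); split; first exact: conv_hull_vcomb.
apply: inner_lt_norm => //; have := norm_lt_inner e0 cp.
have -> : inner (vsub (vcomb t s p) (vcomb t s c)) (vsub (vcomb t s p) (vcomb t s c))
          = (1 - t) * (1 - t) * inner (vsub p c) (vsub p c).
  by rewrite /inner -sumR_mull; apply: eq_sumR => i; rewrite /vsub /vcomb; ring.
have : (1 - t) * (1 - t) <= 1 by nra.
by have := inner_self_ge0 (vsub p c); nra.
Qed.

End ClosureHull.

Lemma inner_lt_of_entries d (a b : Vec d) del : 0 < del ->
  (forall i, Rabs (a i - b i) < Rmin 1 (del / (INR (d * d) + 1))) ->
  inner (vsub a b) (vsub a b) < del.
Proof.
move=> del0 ab; set e := Rmin 1 _ in ab; set m := INR (d * d).
have m0 : 0 <= m := pos_INR _.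
have e1 : e <= 1 := Rmin_l _ _.
have e2 : e <= del / (m + 1) := Rmin_r _ _.
have sq i : vsub a b i * vsub a b i <= del / (m + 1).
  by have [] := Rabs_def2 _ _ (ab i); rewrite /vsub => ? ?; nra.
apply: (Rle_lt_trans _ _ _ (ler_sumR sq)); rewrite sumR_const -/m.
have -> : m * (del / (m + 1)) = del - del / (m + 1) by field; lra.
have : 0 < del / (m + 1) by apply: Rdiv_lt_0_compat; lra.
lra.
Qed.

Module Compactness.
Import all_order all_classical all_reals all_analysis Rstruct_topology.
Import Order.TTheory Num.Theory Num.Def.
Local Open Scope classical_set_scope.

Lemma ball_entry n (v w : 'rV[R]_n) e :
  ball v e w -> forall i, Rabs (v ord0 i - w ord0 i) < e.
Proof.
rewrite mx_norm_ball /ball_ => vw i; apply/RltP; rewrite RabsE.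
apply: le_lt_trans vw; rewrite [leRHS]/normr /= mx_normrE.
by apply/bigmax_geP; right; exists (ord0, i); rewrite //= !mxE.
Qed.

Lemma pos_Rmin1 m del : 0 < del -> 0 < Rmin 1 (del / (INR m + 1)).
Proof.
by move=> del0; apply: Rmin_pos; [lra | apply: Rdiv_lt_0_compat => //; have := pos_INR m; lra].
Qed.

(* Transported from [EVT_max_rV] on row vectors. *)
Lemma exists_argmax d (X : Vec d -> Prop) (F : Vec d -> R) :
  (exists x, X x) ->
  (forall v, Defs.closure X v -> X v) ->
  (exists B, forall x, X x -> inner x x <= B) ->
  (forall x eps, 0 < eps -> exists del, 0 < del /\
     forall y, inner (vsub y x) (vsub y x) < del -> Rabs (F y - F x) < eps) ->
  exists x, X x /\ forall y, X y -> F y <= F x.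
Proof.
move=> [x0 Xx0] Xcl [B XB] Fcont.
pose toV (v : 'rV[R]_(d * d)) : Vec d := fun i => v ord0 i.
pose ofV (x : Vec d) : 'rV[R]_(d * d) := (\row_i x i)%R.
have toVK x : toV (ofV x) = x by apply: functional_extensionality => i; rewrite /toV mxE.
pose A := [set v : 'rV[R]_(d * d) | X (toV v)].
pose M := Rabs B + 1.
have A0 : A !=set0 by exists (ofV x0); rewrite /A /= toVK.
have Abox : A `<=` [set v | forall i, `[(- M)%R, M]%classic (v ord0 i)].
  move=> v Av i /=; rewrite in_itv /=.
  have := ler_term_sumR (f := fun j => toV v j * toV v j) i (fun j => ltac:(nra)).
  move=> /(Rle_trans _ _ _)/(_ (XB _ Av)) vi.
  have BB := Rle_abs B; rewrite /toV in vi.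
  have [lo hi] : - M <= v ord0 i /\ v ord0 i <= M by rewrite /M; split; nra.
  by apply/andP; split; apply/RleP.
have Acl : closed A.
  move=> v Av; apply: Xcl => eps eps0; have e0 : 0 < eps * eps by nra.
  have [w [Aw vw]] := Av _ (nbhsx_ballx v (Rmin 1 (eps * eps / (INR (d * d) + 1)))
                                (ltac:(apply/RltP; exact: pos_Rmin1))).
  exists (toV w); split => //; apply: inner_lt_norm => //.
  by apply: inner_lt_of_entries => // i; exact: ball_entry vw i.
have Acpt : compact A.
  apply: (subclosed_compact Acl _ Abox).
  by apply: (@rV_compact _ _ (fun _ => `[(- M)%R, M]%classic)) => _; exact: segment_compact.
have Fc : {within A, continuous (F \o toV)}.
  apply: continuous_subspaceT => v.
  apply: (proj2 (@pseudometric_normed_Zmodule.cvgrPdist_lt _ R^o _ _ (nbhs_filter v) _ _)).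
  move=> eps /RltP eps0; have [del [del0 Fdel]] := Fcont (toV v) eps eps0.
  apply/nbhs_ballP; exists (Rmin 1 (del / (INR (d * d) + 1))).
    exact/RltP/pos_Rmin1.
  move=> w /= vw; apply/RltP; rewrite -RabsE Rabs_minus_sym; apply: Fdel.
  by apply: inner_lt_of_entries => // i; rewrite Rabs_minus_sym; exact: ball_entry vw i.
have [c Ac cmax] := EVT_max_rV A0 Acpt Fc.
exists (toV c); split; first by move: Ac; rewrite inE.
by move=> y Xy; apply/RleP; have := cmax (ofV y); rewrite /= toVK; apply; rewrite inE /A /= toVK.
Qed.

End Compactness.

Section Matrices.
Variable d : nat.
Implicit Types (A B C : Mat d) (u v q : Vec d).

Definition rowsums1 A : Prop := forall i, sumR (fun j => A i j) = 1.
Definition colsums1 A : Prop := forall j, sumR (fun i => A i j) = 1.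

Lemma mapply_mmul A B q : mapply (mmul A B) q = mapply A (mapply B q).
Proof.
apply: functional_extensionality => i; rewrite /mapply /mmul.
rewrite (@eq_sumR _ _ (fun j => sumR (fun k => A i k * B k j * q j))); last first.
  by move=> j; rewrite sumR_mulr.
by rewrite exchange_sumR; apply: eq_sumR => k; rewrite -sumR_mull; apply: eq_sumR => j; ring.
Qed.

Lemma mtr_mmul A B : mtr (mmul A B) = mmul (mtr B) (mtr A).
Proof.
apply: functional_extensionality => i; apply: functional_extensionality => j.
by apply: eq_sumR => k; rewrite /mtr; ring.
Qed.

Lemma mapply_mid q : mapply (@mid d) q = q.
Proof. by apply: functional_extensionality => i; exact: sumR_delta. Qed.

Lemma orthogonal_of_mul_tr A : mmul A (mtr A) = @mid d -> Defs.orthogonal A.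
Proof.
move=> AAt; pose M : 'M[R]_(d * d) := (\matrix_(i, j) A i j)%R.
have MMt : (M *m M^T = 1%:M)%R.
  apply/matrixP => i j; rewrite !mxE.
  transitivity (mmul A (mtr A) i j); first by apply: eq_bigr => k _; rewrite !mxE.
  by rewrite AAt /mid; case: (i == j).
have MtM := mulmx1C MMt.
apply: functional_extensionality => i; apply: functional_extensionality => j.
have := congr1 (fun X : 'M[R]_(d * d) => X i j) MtM; rewrite /= !mxE => E.
rewrite /mmul /mtr /mid; transitivity (\sum_(k < d * d) M^T i k * M k j)%R.
  by apply: eq_bigr => k _; rewrite !mxE.
by rewrite E; case: (i == j).
Qed.

Lemma orthogonal_mul_tr A : Defs.orthogonal A -> mmul A (mtr A) = @mid d.
Proof. exact: (@orthogonal_of_mul_tr (mtr A)). Qed.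

Lemma orthK A q : Defs.orthogonal A -> mapply (mtr A) (mapply A q) = q.
Proof. by move=> AtA; rewrite -mapply_mmul AtA mapply_mid. Qed.

Lemma orthKV A q : Defs.orthogonal A -> mapply A (mapply (mtr A) q) = q.
Proof. by move=> /orthogonal_mul_tr AAt; rewrite -mapply_mmul AAt mapply_mid. Qed.

Lemma inner_mapply_tr A u v : inner (mapply (mtr A) u) v = inner u (mapply A v).
Proof.
rewrite /inner /mapply /mtr.
rewrite (@eq_sumR _ _ (fun i => sumR (fun j => A j i * u j * v i))); last first.
  by move=> i; rewrite sumR_mulr.
by rewrite exchange_sumR; apply: eq_sumR => j; rewrite -sumR_mull; apply: eq_sumR => i; ring.
Qed.

Lemma sumR_mapply A v : colsums1 A -> sumR (mapply A v) = sumR v.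
Proof.
move=> A1; rewrite /mapply exchange_sumR; apply: eq_sumR => j.
by rewrite sumR_mulr A1 Rmult_1_l.
Qed.

Lemma rowsums1_mmul A B : rowsums1 A -> rowsums1 B -> rowsums1 (mmul A B).
Proof.
move=> A1 B1 i; rewrite /mmul exchange_sumR.
rewrite (@eq_sumR _ _ (fun k => A i k * 1)); last by move=> k; rewrite sumR_mull B1.
by rewrite sumR_mulr A1; ring.
Qed.

Lemma colsums1_mmul A B : colsums1 A -> colsums1 B -> colsums1 (mmul A B).
Proof.
move=> A1 B1 j; rewrite /mmul exchange_sumR.
rewrite (@eq_sumR _ _ (fun k => 1 * B k j)); last by move=> k; rewrite sumR_mulr A1.
by rewrite sumR_mull B1; ring.
Qed.

Lemma rowsums1_mid : rowsums1 (@mid d).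
Proof. by move=> i; rewrite -(sumR_delta (fun _ => 1) i); apply: eq_sumR => j; rewrite Rmult_1_r. Qed.

Lemma colsums1_mid : colsums1 (@mid d).
Proof.
move=> j; rewrite -(sumR_delta (fun _ => 1) j); apply: eq_sumR => i.
by rewrite /mid eq_sym Rmult_1_r.
Qed.

(* [A^T 1 = A^T (A 1) = 1]. *)
Lemma colsums1_orthogonal A : Defs.orthogonal A -> rowsums1 A -> colsums1 A.
Proof.
move=> AtA A1 j.
transitivity (sumR (fun k => sumR (fun i => A i j * A i k))).
  rewrite -exchange_sumR; apply: eq_sumR => i.
  by rewrite sumR_mull A1 Rmult_1_r.
rewrite -(colsums1_mid j); apply: eq_sumR => k.
by rewrite -(f_equal (fun F => F k j) AtA); apply: eq_sumR => i; rewrite /mtr; ring.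
Qed.

Lemma mapply_cvec A : rowsums1 A -> mapply A (@cvec d) = @cvec d.
Proof.
by move=> A1; apply: functional_extensionality => i; rewrite /mapply /cvec sumR_mulr A1; ring.
Qed.

End Matrices.

Definition kappa d : R := 1 / (dR d * (dR d + 1)).

Section UnitGerm.
Variable d : nat.
Hypothesis d_ge2 : (2 <= d)%N.
Local Notation N := (dR d).

Lemma dR_ge2 : 2 <= N.
Proof. by rewrite /dR; have := le_INR 2 d; move/leP: d_ge2 => h /(_ h) /=; lra. Qed.

Lemma INR_dd : INR (d * d) = N * N.
Proof. by rewrite mult_INR. Qed.

Lemma kappa_gt0 : 0 < kappa d.
Proof. by have := dR_ge2; rewrite /kappa => ?; apply: Rdiv_lt_0_compat; nra. Qed.

Definition unit_germ (i : Idx d) : Vec d := fun j => (N * mid i j + 1) / (N * (N + 1)).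

Lemma mapply_unit_germ (C : Mat d) (i j : Idx d) :
  mapply C (unit_germ j) i = (N * C i j + sumR (fun l => C i l)) / (N * (N + 1)).
Proof.
have N2 := dR_ge2; rewrite /mapply /unit_germ.
rewrite (@eq_sumR _ _ (fun l => N / (N * (N + 1)) * (mid j l * C i l)
                               + 1 / (N * (N + 1)) * C i l)); last first.
  by move=> l; field; lra.
rewrite sumRD !sumR_mull sumR_delta.
by change (sumR (C i)) with (sumR (fun l => C i l)); field; lra.
Qed.

Lemma inner_unit_germ (i : Idx d) (q : Vec d) :
  inner (unit_germ i) q = (N * q i + sumR q) / (N * (N + 1)).
Proof.
rewrite innerC (_ : inner q (unit_germ i) = mapply (fun _ => q) (unit_germ i) i) //.
by rewrite mapply_unit_germ.
Qed.

Lemma sumR_unit_germ (i : Idx d) : sumR (unit_germ i) = 1.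
Proof.
have N2 := dR_ge2.
rewrite -(sumR_mapply (unit_germ i) (@colsums1_mid d)).
rewrite (_ : sumR (mapply (@mid d) (unit_germ i)) = inner (unit_germ i) (fun _ => 1)).
  by rewrite inner_unit_germ sumR_const INR_dd; field; lra.
by rewrite mapply_mid; apply: eq_sumR => j; ring.
Qed.

Lemma inner_unit_germ_self (i : Idx d) : inner (unit_germ i) (unit_germ i) = 2 * kappa d.
Proof.
have N2 := dR_ge2.
by rewrite inner_unit_germ sumR_unit_germ /unit_germ /mid eqxx /kappa; field; lra.
Qed.

Lemma orbital_germ_tr (A : Mat d) (i : Idx d) : colsums1 A ->
  (fun j => (N * A i j + 1) / (N * (N + 1))) = mapply (mtr A) (unit_germ i).
Proof.
by move=> A1; apply: functional_extensionality => j; rewrite mapply_unit_germ A1.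
Qed.

Lemma inner_unit_germ_mapply_ge (D : Mat d) (i j : Idx d) : rowsums1 D -> colsums1 D ->
  inner (unit_germ j) (mapply D (unit_germ i)) >= kappa d <-> D j i >= - (1 / N).
Proof.
have N2 := dR_ge2; move=> D1 D1'.
rewrite inner_unit_germ mapply_unit_germ D1 sumR_mapply // sumR_unit_germ /kappa.
have -> : (N * ((N * D j i + 1) / (N * (N + 1))) + 1) / (N * (N + 1))
          = 1 / (N * (N + 1)) + (D j i + 1 / N) * (1 / ((N + 1) * (N + 1))).
  by field; lra.
have pos : 0 < 1 / ((N + 1) * (N + 1)) by apply: Rdiv_lt_0_compat; nra.
by split => h; nra.
Qed.

End UnitGerm.

Section Qplex.
Variable d : nat.
Hypothesis d_ge2 : (2 <= d)%N.
Variable Q : Vec d -> Prop.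
Hypothesis qQ : qplex Q.
Local Notation N := (dR d).

Lemma qplex_simplex q : Q q -> (forall i, 0 <= q i) /\ sumR q = 1.
Proof. by case: qQ => sub _ /sub [[]]. Qed.

Lemma qplex_norm_le q : Q q -> inner q q <= 2 * kappa d.
Proof.
case: qQ => sub _ /sub [[_ q1] [_ ball]]; have N2 := dR_ge2 d_ge2.
have ro0 : 0 <= ro2 d.
  by rewrite /ro2; apply: Rmult_le_pos; [lra | apply/Rlt_le/Rinv_0_lt_compat; nra].
have : inner (vsub q (@cvec d)) (vsub q (@cvec d)) <= ro2 d.
  by apply: sqrt_le_0 => //; exact: inner_self_ge0.
have qc : inner q (@cvec d) = 1 / (N * N).
  by rewrite /inner /cvec sumR_mulr q1; field; lra.
have cc : inner (@cvec d) (@cvec d) = 1 / (N * N).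
  by rewrite /inner /cvec sumR_const INR_dd; field; lra.
rewrite inner_vsub_self qc cc /ro2 /kappa.
have : (N - 1) / (N * N * (N + 1)) + 1 / (N * N) = 2 * (1 / (N * (N + 1))) by field; lra.
lra.
Qed.

Lemma qplex_inner_ge p q : Q p -> Q q -> inner p q >= kappa d.
Proof. by case: qQ => _ polarQ /polarQ [_ ge] /ge. Qed.

Lemma qplex_inner_le p q : Q p -> Q q -> inner p q <= 2 * kappa d.
Proof.
move=> Qp Qq; have := inner_self_ge0 (vsub p q); rewrite inner_vsub_self.
by have := qplex_norm_le Qp; have := qplex_norm_le Qq; lra.
Qed.

Lemma qplex_polar u : sumR u = 1 -> (forall v, Q v -> inner u v >= kappa d) -> Q u.
Proof. by case: qQ => _ polarQ u1 ge; apply/polarQ. Qed.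

Lemma qplex_closed v : Defs.closure Q v -> Q v.
Proof.
move=> Qv; apply: qplex_polar.
  by apply: (closure_sumR Qv) => u /qplex_simplex [].
move=> w Qw; apply/Rle_ge/(closure_inner_ge Qv) => u Qu.
exact/Rge_le/qplex_inner_ge.
Qed.

Lemma unit_germ_in_qplex (i : Idx d) : Q (unit_germ i).
Proof.
have N2 := dR_ge2 d_ge2.
apply: qplex_polar; first exact: sumR_unit_germ.
move=> v Qv; have [v0 v1] := qplex_simplex Qv.
rewrite inner_unit_germ // v1 /kappa; have vi0 := v0 i.
apply/Rle_ge/Rmult_le_compat_r; first by apply/Rlt_le/Rinv_0_lt_compat; nra.
nra.
Qed.

(* The squared norm is strictly convex. *)
Lemma extreme_of_norm q : Q q -> inner q q = 2 * kappa d -> extreme_point Q q.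
Proof.
move=> Qq qq; split => // a b t Qa Qb t01 qab.
have : inner (vsub a b) (vsub a b) <= 0.
  rewrite (_ : q = vcomb t a b) // inner_vcomb_self in qq.
  have na := qplex_norm_le Qa; have nb := qplex_norm_le Qb.
  have tt : 0 < t * (1 - t) by nra.
  have : t * (1 - t) * inner (vsub a b) (vsub a b) <= 0 by nra.
  by nra.
move=> /inner_vsub_le0 ab; subst b.
have aq : a = q by rewrite qab; apply: functional_extensionality => i; rewrite /vcomb; ring.
by split.
Qed.

End Qplex.

Section Preservation.
Variable d : nat.
Hypothesis d_ge2 : (2 <= d)%N.
Variable Q : Vec d -> Prop.
Hypothesis qQ : qplex Q.
Local Notation N := (dR d).

Definition Q_automorphism (A : Mat d) : Prop :=
  rowsums1 A /\ colsums1 A /\ (forall p, Q p <-> exists q, Q q /\ p = mapply A q).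

Section Measurement.
Variable r : Mat d.
Hypothesis r_meas : measurement r.
Hypothesis r_pres : Q_preserving Q r.

Let mass i := sumR (fun j => r i j).
Let row i : Vec d := fun j => r i j.

Lemma q_r_row q i : q_r r q i = (N + 1) * inner q (row i) - mass i / N.
Proof.
rewrite /q_r /inner /mass /row /Rdiv -sumR_mull -sumR_mulr -sumRB.
by apply: eq_sumR => j; ring.
Qed.

Lemma inner_row_ge q i : Q q -> mass i / N <= (N + 1) * inner q (row i).
Proof.
move=> Qq; have Qqr : Q (q_r r q) by apply/r_pres; exists q.
by have := (qplex_simplex qQ Qqr).1 i; rewrite q_r_row; lra.
Qed.

Lemma mass_ge0 i : 0 <= mass i.
Proof. by apply: sumR_ge0 => j; exact: r_meas.1. Qed.

Lemma scaled_row_in_qplex i : 0 < mass i -> Q (fun j => r i j / mass i).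
Proof.
have N2 := dR_ge2 d_ge2 => m0.
apply: (qplex_polar qQ); first by rewrite /Rdiv sumR_mulr -/(mass i); field; lra.
move=> v Qv; have := inner_row_ge i Qv.
have -> : inner (fun j => r i j / mass i) v = inner v (row i) / mass i.
  by rewrite /inner /Rdiv -sumR_mulr; apply: eq_sumR => j; rewrite /row; ring.
rewrite /kappa => ge; apply/Rle_ge.
apply: (Rmult_le_reg_r (mass i * (N + 1))); first by nra.
have -> : inner v (row i) / mass i * (mass i * (N + 1)) = (N + 1) * inner v (row i).
  by field; lra.
suff -> : 1 / (N * (N + 1)) * (mass i * (N + 1)) = mass i / N by [].
by field; lra.
Qed.

Lemma inner_row_le q i : Q q -> inner q (row i) <= 2 * kappa d * mass i.
Proof.
move=> Qq; have [m0 | m0] := Rle_lt_dec (mass i) 0.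
  have mass0 : mass i = 0 by have := mass_ge0 i; lra.
  have row0 := psumR_eq0 (fun j => r_meas.1 i j) mass0.
  rewrite /inner (@eq_sumR _ _ (fun _ => 0)); last by move=> j; rewrite /row row0; ring.
  by rewrite sumR_const; have := mass_ge0 i; have := kappa_gt0 d_ge2; nra.
have := qplex_inner_le d_ge2 qQ Qq (scaled_row_in_qplex m0).
have -> : inner q (fun j => r i j / mass i) = inner q (row i) / mass i.
  by rewrite /inner /Rdiv -sumR_mulr; apply: eq_sumR => j; rewrite /row; ring.
move=> le; have -> : inner q (row i) = inner q (row i) / mass i * mass i by field; lra.
by apply: Rmult_le_compat_r; lra.
Qed.

Lemma unit_germ_q_r (k : Idx d) : exists q, Q q /\ unit_germ k = q_r r q.
Proof. by apply/r_pres; exact: (unit_germ_in_qplex d_ge2 qQ). Qed.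

Lemma unit_germ_diag (k : Idx d) : unit_germ k k = 1 / N.
Proof. by have N2 := dR_ge2 d_ge2; rewrite /unit_germ /mid eqxx; field; lra. Qed.

(* Evaluate at [k] a preimage of [unit_germ k]. *)
Lemma mass_ge1 k : 1 <= mass k.
Proof.
have N2 := dR_ge2 d_ge2; have [q [Qq E]] := unit_germ_q_r k.
have := f_equal (fun F => F k) E; rewrite /= unit_germ_diag q_r_row => Ek.
have := inner_row_le k Qq; rewrite /kappa => le.
have : (N + 1) * inner q (row k) <= 2 / N * mass k.
  have <- : (N + 1) * (2 * (1 / (N * (N + 1))) * mass k) = 2 / N * mass k by field; lra.
  by apply: Rmult_le_compat_l; lra.
move=> le'; have : 1 / N <= mass k / N by move: Ek le'; rewrite /Rdiv; lra.
move=> le''; apply: (Rmult_le_reg_r (/ N)); first by apply: Rinv_0_lt_compat; lra.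
by move: le''; rewrite /Rdiv; lra.
Qed.

(* The masses are at least 1 and sum to [d^2] over [d^2] rows. *)
Lemma mass_eq1 k : mass k = 1.
Proof.
have S0 : sumR (fun i => mass i - 1) = 0.
  rewrite sumRB /mass exchange_sumR (@eq_sumR _ _ (fun _ => 1)) => [|j]; last exact: r_meas.2.
  by rewrite sumR_const; ring.
have := psumR_eq0 (f := fun i => mass i - 1) (fun i => ltac:(have := mass_ge1 i; lra)) S0 k.
lra.
Qed.

Lemma row_in_qplex k : Q (row k).
Proof.
have -> : row k = (fun j => r k j / mass k).
  by apply: functional_extensionality => j; rewrite mass_eq1 /Rdiv Rinv_1 Rmult_1_r.
by apply: scaled_row_in_qplex; rewrite mass_eq1; lra.
Qed.

(* The preimage of [unit_germ k] pairs with [row k] to the maximal norm [2 kappa], so it is [row k]. *)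
Lemma row_gram k i : unit_germ k i = (N + 1) * inner (row k) (row i) - 1 / N.
Proof.
have N2 := dR_ge2 d_ge2; have [q [Qq E]] := unit_germ_q_r k.
have := f_equal (fun F => F k) E; rewrite /= unit_germ_diag q_r_row mass_eq1 => Ek.
have qrow : inner q (row k) = 2 * kappa d.
  apply: (Rmult_eq_reg_l (N + 1)); last lra.
  have -> : (N + 1) * (2 * kappa d) = 2 / N by rewrite /kappa; field; lra.
  by move: Ek; rewrite /Rdiv; lra.
have qE : q = row k.
  apply: inner_vsub_le0; rewrite inner_vsub_self.
  by have := qplex_norm_le d_ge2 qQ Qq; have := qplex_norm_le d_ge2 qQ (row_in_qplex k); lra.
by rewrite E qE q_r_row mass_eq1.
Qed.

Lemma stretched_eq i j : stretched r i j = (N + 1) * r i j - 1 / N.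
Proof. by rewrite /stretched -/(mass i) mass_eq1; ring. Qed.

Lemma stretched_mul_tr : mmul (stretched r) (mtr (stretched r)) = @mid d.
Proof.
have N2 := dR_ge2 d_ge2.
apply: functional_extensionality => i; apply: functional_extensionality => k.
rewrite /mmul /mtr (@eq_sumR _ _ (fun j => (N + 1) * (N + 1) * (r i j * r k j)
    + (- (N + 1) / N) * r i j + (- (N + 1) / N) * r k j + 1 / (N * N))); last first.
  by move=> j; rewrite !stretched_eq; field; lra.
rewrite !sumRD !sumR_mull sumR_const INR_dd -/(mass i) -/(mass k) !mass_eq1.
have -> : sumR (fun j => r i j * r k j) = (unit_germ k i + 1 / N) / (N + 1).
  by rewrite row_gram innerC /inner /row /=; field; lra.
by rewrite /unit_germ /mid eq_sym; case: (i == k); field; lra.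
Qed.

Lemma q_r_mapply q : Q q -> q_r r q = mapply (stretched r) q.
Proof.
move=> Qq; apply: functional_extensionality => i.
rewrite q_r_row mass_eq1 /mapply (@eq_sumR _ _ (fun j => (N + 1) * (q j * r i j) + - (1 / N) * q j)).
  by rewrite sumRD !sumR_mull (qplex_simplex qQ Qq).2; rewrite /inner /row; ring.
by move=> j; rewrite stretched_eq; ring.
Qed.

Lemma measurement_automorphism :
  Q_automorphism (stretched r) /\ Defs.orthogonal (stretched r).
Proof.
have N2 := dR_ge2 d_ge2.
split; last exact/orthogonal_of_mul_tr/stretched_mul_tr.
split; [|split].
- move=> i; rewrite (@eq_sumR _ _ (fun j => (N + 1) * r i j + - (1 / N))).
    by rewrite sumRD sumR_mull sumR_const INR_dd -/(mass i) mass_eq1; field; lra.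
  by move=> j; rewrite stretched_eq; ring.
- move=> j; rewrite (@eq_sumR _ _ (fun i => (N + 1) * r i j + - (1 / N))).
    by rewrite sumRD sumR_mull sumR_const INR_dd r_meas.2; field; lra.
  by move=> i; rewrite stretched_eq; ring.
- move=> p; split.
  + by move/r_pres => [q [Qq ->]]; exists q; rewrite q_r_mapply.
  + by move=> [q [Qq ->]]; apply/r_pres; exists q; rewrite q_r_mapply.
Qed.

End Measurement.

Lemma automorphism_maps A q : Q_automorphism A -> Q q -> Q (mapply A q).
Proof. by move=> [_ [_ onto]] Qq; apply/onto; exists q. Qed.

Lemma automorphism_entry_ge A i j : Q_automorphism A -> A i j >= - (1 / N).
Proof.
move=> autA; have [A1 [A1' _]] := autA.
apply/(inner_unit_germ_mapply_ge d_ge2 j i A1 A1')/(qplex_inner_ge qQ).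
  exact: (unit_germ_in_qplex d_ge2 qQ).
by apply: automorphism_maps => //; exact: (unit_germ_in_qplex d_ge2 qQ).
Qed.

Lemma pres_group_automorphism A : pres_group Q A -> Q_automorphism A /\ Defs.orthogonal A.
Proof. by move=> [r [r_meas [r_pres ->]]]; exact: measurement_automorphism. Qed.

(* The measurement realizing [A] is its orbital germ, [r(i|j) = s^A_i(j)]. *)
Lemma automorphism_pres_group A : Q_automorphism A -> pres_group Q A.
Proof.
have N2 := dR_ge2 d_ge2 => autA; have [A1 [A1' onto]] := autA.
pose r : Mat d := fun i j => (N * A i j + 1) / (N * (N + 1)).
have q_rE q : Q q -> q_r r q = mapply A q.
  move=> Qq; apply: functional_extensionality => i; rewrite /q_r /r /mapply.
  rewrite (@eq_sumR _ _ (fun j => A i j * q j + 1 / N * q j + - (1 / (N * (N + 1))) * A i j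
                              + - (1 / (N * N * (N + 1))))); last by move=> j; field; lra.
  by rewrite !sumRD !sumR_mull sumR_const INR_dd (qplex_simplex qQ Qq).2 A1; field; lra.
exists r; split; [split | split].
- move=> i j; rewrite /r; have ge := automorphism_entry_ge i j autA.
  apply: Rmult_le_pos; last by apply/Rlt_le/Rinv_0_lt_compat; nra.
  have : N * (- (1 / N)) = -1 by field; lra.
  have : N * A i j >= N * (- (1 / N)) by apply/Rle_ge/Rmult_le_compat_l; lra.
  lra.
- move=> j; rewrite /r /Rdiv sumR_mulr sumRD sumR_mull sumR_const INR_dd A1'.
  by field; lra.
- move=> p; split.
  + by move/onto => [q [Qq ->]]; exists q; rewrite q_rE.
  + by move=> [q [Qq ->]]; apply/onto; exists q; rewrite q_rE.
- apply: functional_extensionality => i; apply: functional_extensionality => j.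
  rewrite /stretched /r /Rdiv sumR_mulr sumRD sumR_mull sumR_const INR_dd A1.
  by field; lra.
Qed.

Lemma automorphism_mid : Q_automorphism (@mid d).
Proof.
split; [exact: rowsums1_mid | split; [exact: colsums1_mid |]].
by move=> p; split => [Qp | [q [Qq ->]]]; [exists p | ]; rewrite mapply_mid.
Qed.

Lemma automorphism_mmul A B :
  Q_automorphism A -> Q_automorphism B -> Q_automorphism (mmul A B).
Proof.
move=> autA autB; have [A1 [A1' ontoA]] := autA; have [B1 [B1' ontoB]] := autB.
split; [exact: rowsums1_mmul | split; [exact: colsums1_mmul |]].
move=> p; split; last first.
  by move=> [q [Qq ->]]; rewrite mapply_mmul; do 2!apply: automorphism_maps => //.
move/ontoA => [q1 [/ontoB [q2 [Qq2 ->]] ->]].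
by exists q2; rewrite mapply_mmul.
Qed.

Lemma automorphism_mtr A :
  Q_automorphism A -> Defs.orthogonal A -> Q_automorphism (mtr A).
Proof.
move=> autA AtA; have [A1 [A1' ontoA]] := autA.
split; [exact: A1' | split; [exact: A1 |]].
move=> p; split.
- by move=> Qp; exists (mapply A p); rewrite orthK //; split => //; exact: automorphism_maps.
- by move=> [q [/ontoA [q' [Qq' ->]] ->]]; rewrite orthK.
Qed.

Lemma pres_group_mid : pres_group Q (@mid d).
Proof. exact/automorphism_pres_group/automorphism_mid. Qed.

Lemma pres_group_mmul A B : pres_group Q A -> pres_group Q B -> pres_group Q (mmul A B).
Proof.
move=> /pres_group_automorphism [autA _] /pres_group_automorphism [autB _].
exact/automorphism_pres_group/automorphism_mmul.
Qed.

Lemma pres_group_mtr A : pres_group Q A -> pres_group Q (mtr A).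
Proof.
move=> /pres_group_automorphism [autA AtA].
exact/automorphism_pres_group/automorphism_mtr.
Qed.

Lemma pres_group_stochastic : stochastic (pres_group Q).
Proof.
split.
  split; first by move=> A /pres_group_automorphism [].
  by split; [exact: pres_group_mid | split; [exact: pres_group_mmul | exact: pres_group_mtr]].
move=> A /pres_group_automorphism [autA _]; split.
  by move=> i j; exact: automorphism_entry_ge.
by apply: mapply_cvec; case: autA.
Qed.

Lemma orbital_germ_in_qplex s : orbital_germ (pres_group Q) s -> Q s.
Proof.
move=> [A [i [/pres_group_automorphism [autA AtA] ->]]].
rewrite orbital_germ_tr //; last by case: autA => _ [].
by apply: automorphism_maps; [exact: automorphism_mtr | exact: (unit_germ_in_qplex d_ge2 qQ)].
Qed.

End Preservation.

Lemma nonpos_of_le_mul (x k : R) : 0 <= k -> (forall t, 0 < t <= 1 -> x <= t * k) -> x <= 0.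
Proof.
move=> k0 le; have [x0 | x0] := Rle_lt_dec x 0 => //.
pose t := Rmin 1 (x / (k + 1)).
have t0 : 0 < t by apply: Rmin_pos; [lra | apply: Rdiv_lt_0_compat; lra].
have t1 : t <= x / (k + 1) := Rmin_r _ _.
have := le t (conj t0 (Rmin_l _ _)).
have : t * k <= x / (k + 1) * k by apply: Rmult_le_compat_r.
have -> : x / (k + 1) * k = x - x / (k + 1) by field; lra.
have : 0 < x / (k + 1) by apply: Rdiv_lt_0_compat; lra.
lra.
Qed.

Definition qobj d (a : Vec d) (c : R) (x : Vec d) : R := inner a x + c * inner x x.

Section QuadraticObjective.
Variable d : nat.
Implicit Types (a u v x y : Vec d) (X S : Vec d -> Prop).

Lemma qobj_continuous a c x eps : 0 < eps -> exists del, 0 < del /\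
  forall y, inner (vsub y x) (vsub y x) < del -> Rabs (qobj a c y - qobj a c x) < eps.
Proof.
move=> eps0; set g := fun i => a i + 2 * c * x i.
have diff y : qobj a c y - qobj a c x =
              inner (vsub y x) g + c * inner (vsub y x) (vsub y x).
  by rewrite /qobj /inner -!sumR_mull -!sumRD -sumRB; apply: eq_sumR => i; rewrite /g /vsub; ring.
have eps2 : 0 < eps / 2 by lra.
have [del1 [del1_0 small]] := inner_small g eps2.
have c1 : 0 < Rabs c + 1 by have := Rabs_pos c; lra.
exists (Rmin del1 (eps / 2 / (Rabs c + 1))); split.
  by apply: Rmin_pos => //; apply: Rdiv_lt_0_compat; lra.
move=> y hy; rewrite diff; have h0 := inner_self_ge0 (vsub y x).
have lt1 := small _ (Rlt_le_trans _ _ _ hy (Rmin_l _ _)).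
have lt2 := Rlt_le_trans _ _ _ hy (Rmin_r _ _).
have lt3 : Rabs (c * inner (vsub y x) (vsub y x)) < eps / 2.
  rewrite Rabs_mult (Rabs_right (inner _ _)); last lra.
  have : (Rabs c + 1) * inner (vsub y x) (vsub y x) < eps / 2.
    have <- : (Rabs c + 1) * (eps / 2 / (Rabs c + 1)) = eps / 2 by field; lra.
    exact: Rmult_lt_compat_l.
  by have := Rabs_pos c; nra.
by have := Rabs_triang (inner (vsub y x) g) (c * inner (vsub y x) (vsub y x)); lra.
Qed.

Lemma qobj_vcomb a c u v t : qobj a c (vcomb t u v) =
  t * qobj a c u + (1 - t) * qobj a c v - c * t * (1 - t) * inner (vsub u v) (vsub u v).
Proof. by rewrite /qobj inner_vcombr inner_vcomb_self; ring. Qed.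

(* For [c > 0] the objective is strictly convex. *)
Lemma argmax_qobj_extreme X a c x : 0 < c -> X x ->
  (forall y, X y -> qobj a c y <= qobj a c x) -> extreme_point X x.
Proof.
move=> c0 Xx xmax; split => // u v t Xu Xv t01 xuv.
have le1 := xmax _ Xu; have le2 := xmax _ Xv.
rewrite xuv -/(vcomb t u v) qobj_vcomb in le1 le2.
have : inner (vsub u v) (vsub u v) <= 0.
  have := inner_self_ge0 (vsub u v).
  have : 0 < c * t * (1 - t) by apply: Rmult_lt_0_compat; nra.
  by nra.
move=> /inner_vsub_le0 uv; subst v.
have ux : u = x by rewrite xuv; apply: functional_extensionality => i; ring.
by split.
Qed.

(* [qobj (2u) (-1) y = |u|^2 - |u - y|^2], so [p] is a nearest point to [u]. *)
Lemma nearest_point_inner S u p : closed_conv_hull S p ->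
  (forall y, closed_conv_hull S y ->
     qobj (fun i => 2 * u i) (-1) y <= qobj (fun i => 2 * u i) (-1) p) ->
  forall s, S s -> inner (vsub u p) s <= inner (vsub u p) p.
Proof.
move=> Pp pmax s Ss; set w := vsub u p.
set x := inner w (vsub s p); set k := inner (vsub s p) (vsub s p).
have k0 : 0 <= k := inner_self_ge0 _.
have xE : x = inner w s - inner w p by rewrite /x innerC inner_vsubl !(innerC w).
suff : x <= 0 by lra.
apply: (nonpos_of_le_mul (k := k / 2)) => [|t t01]; first lra.
have := pmax _ (closed_conv_hull_vcomb Ss Pp (conj (Rlt_le _ _ t01.1) t01.2)).
have -> : qobj (fun i => 2 * u i) (-1) (vcomb t s p) =
          qobj (fun i => 2 * u i) (-1) p + 2 * t * x - t * t * k.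
  rewrite /qobj /x /k /w /inner -!sumR_mull -!sumRD -!sumRB.
  by apply: eq_sumR => i; rewrite /vcomb /vsub; ring.
by case: t01 => t0 _; nra.
Qed.

End QuadraticObjective.

Section ExtremeSupport.
Variable d : nat.
Hypothesis d_ge2 : (2 <= d)%N.
Variable Q : Vec d -> Prop.
Hypothesis qQ : qplex Q.

(* A maximiser of [<w,x> + eps |x|^2] over [Q] is extreme, and tends to maximise [<w,x>]. *)
Lemma qplex_inner_le_extreme (w : Vec d) b :
  (forall x, extreme_point Q x -> inner w x <= b) -> forall u, Q u -> inner w u <= b.
Proof.
move=> ext u Qu; have k0 := kappa_gt0 d_ge2.
suff : inner w u - b <= 0 by lra.
apply: (nonpos_of_le_mul (k := 2 * kappa d)) => [|eps [eps0 _]]; first lra.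
have [x [Qx xmax]] := Compactness.exists_argmax (F := qobj w eps) (ex_intro _ u Qu)
  (qplex_closed qQ) (ex_intro _ _ (qplex_norm_le d_ge2 qQ)) (qobj_continuous w eps).
have := ext x (argmax_qobj_extreme eps0 Qx xmax).
have := xmax u Qu; rewrite /qobj.
have := qplex_norm_le d_ge2 qQ Qx; have := inner_self_ge0 u.
by nra.
Qed.

End ExtremeSupport.

Lemma rowsums1_of_fixed_cvec d (A : Mat d) :
  (2 <= d)%N -> mapply A (@cvec d) = @cvec d -> rowsums1 A.
Proof.
move=> d_ge2 Ac i; have N2 := dR_ge2 d_ge2.
have := f_equal (fun f => f i) Ac; rewrite /mapply /cvec sumR_mulr => E.
apply: (Rmult_eq_reg_r (1 / (dR d * dR d))); first by rewrite E; ring.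
by apply: Rgt_not_eq; apply: Rdiv_lt_0_compat; nra.
Qed.

Section SingleOrbit.
Variable d : nat.
Hypothesis d_ge2 : (2 <= d)%N.
Variable Q : Vec d -> Prop.
Hypothesis qQ : qplex Q.
Hypothesis orbitQ : single_orbit (pres_group Q) Q.
Local Notation S := (orbital_germ (pres_group Q)).
Local Notation P := (closed_conv_hull S).

Let dd_gt0 : (0 < d * d)%N.
Proof. by rewrite muln_gt0 andbb; apply: leq_trans d_ge2. Qed.
Let i0 : Idx d := Ordinal dd_gt0.

Lemma unit_germ_in_orbital_germ (i : Idx d) : S (unit_germ i).
Proof. by exists (@mid d), i; split => //; exact: pres_group_mid. Qed.

Lemma closed_conv_hull_sub_qplex v : P v -> Q v.
Proof.
move=> Pv; apply: (qplex_closed qQ); apply: closure_mono Pv => c Sc.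
have germQ s : S s -> Q s by exact: orbital_germ_in_qplex.
apply: (qplex_polar qQ); first by apply: (conv_hull_sumR _ Sc) => s /germQ /(qplex_simplex qQ) [].
move=> w Qw; apply/Rle_ge/(conv_hull_inner_ge _ Sc) => s Ss.
exact/Rge_le/(qplex_inner_ge qQ)/Qw/germQ.
Qed.

(* [unit_germ i0] is extreme, so every extreme point is [B^T A^T (unit_germ i0)]. *)
Lemma extreme_in_orbital_germ x : extreme_point Q x -> S x.
Proof.
case: orbitQ => q0 [_ orbit] ext_x.
have ext0 : extreme_point Q (unit_germ i0).
  apply: (extreme_of_norm d_ge2 qQ (unit_germ_in_qplex d_ge2 qQ i0)).
  exact: inner_unit_germ_self.
have [A [GA EA]] := (orbit _).1 ext0; have [B [GB EB]] := (orbit _).1 ext_x.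
have q0E : q0 = mapply (mtr A) (unit_germ i0).
  by rewrite EA orthK //; case: (pres_group_automorphism d_ge2 qQ GA).
have GC : pres_group Q (mmul A (mtr B)) by apply: pres_group_mmul => //; exact: pres_group_mtr.
exists (mmul A (mtr B)), i0; split => //.
have [[_ [C1' _]] _] := pres_group_automorphism d_ge2 qQ GC.
by rewrite (orbital_germ_tr d_ge2 i0 C1') mtr_mmul EB q0E -mapply_mmul.
Qed.

(* Krein-Milman: compare [u] with its nearest point [p] in [P]; the extreme
   points, hence all of [Q], lie on [p]'s side of the bisecting hyperplane. *)
Lemma qplex_sub_closed_conv_hull u : Q u -> P u.
Proof.
move=> Qu.
have P0 : exists x, P x.
  by exists (unit_germ i0); apply/closure_subset/conv_hull_subset/unit_germ_in_orbital_germ.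
have Pcl v : Defs.closure P v -> P v by exact: closure_idem.
have Pbd : exists B, forall x, P x -> inner x x <= B.
  by exists (2 * kappa d) => x /closed_conv_hull_sub_qplex; exact: qplex_norm_le.
have [p [Pp pmax]] := Compactness.exists_argmax P0 Pcl Pbd (qobj_continuous (fun i => 2 * u i) (-1)).
have wu : inner (vsub u p) u <= inner (vsub u p) p.
  apply: (qplex_inner_le_extreme d_ge2 qQ) => // x /extreme_in_orbital_germ.
  exact: nearest_point_inner.
have -> : u = p.
  apply: inner_vsub_le0; have E := inner_vsubl u p (vsub u p).
  by rewrite (innerC u) (innerC p) in E; lra.
exact: Pp.
Qed.

Lemma qplex_polar_orbital_germ u :
  sumR u = 1 -> (forall s, S s -> inner u s >= kappa d) -> Q u.
Proof.
move=> u1 Su; apply: (qplex_polar qQ) => // v /qplex_sub_closed_conv_hull Pv.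
rewrite innerC; apply/Rle_ge/(closure_inner_ge Pv) => c Sc.
apply: (conv_hull_inner_ge _ Sc) => s Ss; rewrite innerC; exact/Rge_le/Su.
Qed.

Lemma closed_conv_hull_orbital_germ_qplex : qplex P.
Proof.
have PQ v : P v <-> Q v.
  by split; [exact: closed_conv_hull_sub_qplex | exact: qplex_sub_closed_conv_hull].
case: qQ => sub polarQ; split => [q /PQ /sub // | u].
rewrite PQ -polarQ; split => [] [u1 ge]; split => // v /PQ; exact: ge.
Qed.

Section StochasticExtension.
Variable G : Mat d -> Prop.
Hypothesis G_stoch : stochastic G.
Hypothesis presG : forall A, pres_group Q A -> G A.

Lemma stochastic_rowsums1 A : G A -> rowsums1 A.
Proof. by move=> GA; apply: rowsums1_of_fixed_cvec d_ge2 _; exact: (G_stoch.2 A GA).2. Qed.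

Lemma stochastic_colsums1 A : G A -> colsums1 A.
Proof.
move=> GA; apply: colsums1_orthogonal; last exact: stochastic_rowsums1.
by case: G_stoch => [[orth _] _]; exact: orth.
Qed.

(* [<D^T s^I_j, B^T s^I_i>] is governed by the [(j,i)] entry of [D B^T], which lies in [G]. *)
Lemma stochastic_tr_unit_germ_in_qplex D j : G D -> Q (mapply (mtr D) (unit_germ j)).
Proof.
case: G_stoch => [[_ [_ [Gmul Gtr]]] Gent] GD.
apply: qplex_polar_orbital_germ.
  by rewrite sumR_mapply ?sumR_unit_germ // => k; exact: stochastic_rowsums1.
move=> s [B [i [GB ->]]].
have [[_ [B1' _]] _] := pres_group_automorphism d_ge2 qQ GB.
rewrite (orbital_germ_tr d_ge2 i B1') inner_mapply_tr -mapply_mmul.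
have GE : G (mmul D (mtr B)) by apply: Gmul => //; apply/Gtr/presG.
apply/(inner_unit_germ_mapply_ge d_ge2); [exact: stochastic_rowsums1 | exact: stochastic_colsums1 |].
exact: (Gent _ GE).1.
Qed.

Lemma stochastic_maps_qplex A q : G A -> Q q -> Q (mapply A q).
Proof.
case: G_stoch => [[_ [_ [Gmul Gtr]]] _] GA Qq.
apply: qplex_polar_orbital_germ.
  by rewrite sumR_mapply; [exact: (qplex_simplex qQ Qq).2 | exact: stochastic_colsums1].
move=> s [B [i [GB ->]]].
have [[_ [B1' _]] _] := pres_group_automorphism d_ge2 qQ GB.
rewrite (orbital_germ_tr d_ge2 i B1') innerC -inner_mapply_tr -mapply_mmul -mtr_mmul innerC.
apply: (qplex_inner_ge qQ) => //; apply: stochastic_tr_unit_germ_in_qplex.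
by apply: Gmul => //; exact: presG.
Qed.

Lemma stochastic_sub_pres_group A : G A -> pres_group Q A.
Proof.
move=> GA; apply: (automorphism_pres_group d_ge2 qQ).
case: G_stoch => [[orth [_ [_ Gtr]]] _].
split; [exact: stochastic_rowsums1 | split; [exact: stochastic_colsums1 |]].
move=> p; split => [Qp | [q [Qq ->]]]; last exact: stochastic_maps_qplex.
exists (mapply (mtr A) p); rewrite orthKV; last exact: orth.
by split => //; apply: stochastic_maps_qplex => //; exact: Gtr.
Qed.

End StochasticExtension.

End SingleOrbit.

Theorem mainTheorem16 (d : nat) (Q : Vec d -> Prop) :
  (2 <= d)%N -> qplex Q -> single_orbit (pres_group Q) Q ->
  strongly_maximal (pres_group Q).
Proof.
move=> d_ge2 qQ orbitQ; split; last exact: closed_conv_hull_orbital_germ_qplex.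
split; first exact: pres_group_stochastic.
move=> [G [G_stoch [presG [A [GA notA]]]]]; apply: notA.
exact: (stochastic_sub_pres_group d_ge2 qQ orbitQ G_stoch presG).
Qed.
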